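(* Let $S$ be a commutative ring. (1) Given $t,\delta\in S$, every $n\in V[1,t,\delta]$ has the form $n=-\det[X,Y]$ for some $X,Y\in\mathbb{M}_2(S)$ with $\operatorname{tr}(X)=t$ and $\det(X)=\delta$. (2) Let $X=\begin{pmatrix}a&b\\c&d\end{pmatrix}\in\mathbb{M}_2(S)$, $t=\operatorname{tr}(X)$, $\delta=\det(X)$, $\Delta=t^2-4\delta$. Then for every $Y\in\mathbb{M}_2(S)$: $-c^2\det[X,Y]\in V[1,t,\delta]$ and $-4c^2\det[X,Y]\in V[1,-\Delta]$. (3) With notation as in (2), if moreover $\operatorname{tr}(X)$ and $\operatorname{tr}(Y)$ both lie in $2S$, then $-c^2\det[X,Y]\in V[1,-\Delta]$.
   Context: $[X,Y]=XY-YX$. For $s,t,\delta\in S$, $V[s,t,\delta]=\{s r_1^2+t r_1r_2+\delta r_2^2 : r_1,r_2\in S\}$, and $V[s,\delta]:=V[s,0,\delta]$. *)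

From HB Require Import structures.
From mathcomp Require Import all_boot all_order all_algebra.
Set Implicit Arguments. Unset Strict Implicit. Unset Printing Implicit Defensive.
Import GRing.Theory.
Local Open Scope ring_scope.

Definition lie_mx (S : comPzRingType) (n : nat) (X Y : 'M[S]_n) : 'M[S]_n :=
  X *m Y - Y *m X.

Definition Vset (S : comPzRingType) (s t d : S) : S -> Prop :=
  fun n => exists r1 r2 : S, n = s * r1 ^+ 2 + t * r1 * r2 + d * r2 ^+ 2.

Definition Vset2 (S : comPzRingType) (s d : S) : S -> Prop := Vset s 0 d.

(* Write Z := [X,Y]; then tr Z = 0 and tr (X Z) = 0.  For a traceless
   Z = [[p, q], [r, -p]] the first gives -det Z = p^2 + q r, and for
   X = [[a, b], [c, d]] the second reads c q = (d - a) p - b r.  Eliminating q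
   gives c^2 (-det Z) = R1^2 + t R1 R2 + delta R2^2 with R1 = c p + d r and
   R2 = -r.  Completing the square turns this into the form of V[1, -Delta]
   after multiplying by 4, or without that factor when t and r are both even;
   for Y = [[e, f], [g, h]] the entry r = c (e - h) - g (a - d) is even as soon
   as tr X and tr Y are.  Part (1) is the case of the companion matrix of
   x^2 - t x + delta, where c = 1. *)
From mathcomp Require Import all_boot all_algebra.
From mathcomp Require Import ring.
Set Implicit Arguments.
Unset Strict Implicit.
Unset Printing Implicit Defensive.

Import GRing.Theory.
Local Open Scope ring_scope.

Section BinaryForms.
Variable S : comPzRingType.

Definition binary_form (s t d r1 r2 : S) : S :=
  s * r1 ^+ 2 + t * r1 * r2 + d * r2 ^+ 2.

Lemma Vset_binary_form (s t d r1 r2 : S) : Vset s t d (binary_form s t d r1 r2).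
Proof. by exists r1, r2. Qed.

Lemma binary_form_complete_square (t d r1 r2 : S) :
  4%:R * binary_form 1 t d r1 r2 =
  binary_form 1 0 (- (t ^+ 2 - 4%:R * d)) (2%:R * r1 + t * r2) r2.
Proof. rewrite /binary_form; ring. Qed.

Lemma binary_form_complete_square_even (u d r1 s : S) :
  binary_form 1 (2%:R * u) d r1 (2%:R * s) =
  binary_form 1 0 (- ((2%:R * u) ^+ 2 - 4%:R * d)) (r1 + 2%:R * u * s) s.
Proof. rewrite /binary_form; ring. Qed.

End BinaryForms.

Section Commutator.
Variables (S : comPzRingType) (n : nat).
Implicit Types X Y : 'M[S]_n.

Lemma mxtrace_lie X Y : \tr (lie_mx X Y) = 0.
Proof. by rewrite /lie_mx raddfB /= mxtrace_mulC subrr. Qed.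

Lemma mxtrace_mul_lie X Y : \tr (X *m lie_mx X Y) = 0.
Proof.
by rewrite /lie_mx mulmxBr raddfB /= [in X in _ - X]mulmxA [X in _ - X]mxtrace_mulC subrr.
Qed.

End Commutator.

Section TwoByTwo.
Variable S : comPzRingType.
Implicit Types X Y Z : 'M[S]_2.

Lemma mxtrace22 Z : \tr Z = Z 0 0 + Z 1 1.
Proof.
by rewrite /mxtrace !big_ord_recl big_ord0 addr0; congr (_ + Z _ _); apply: val_inj.
Qed.

Lemma mulmx22E X Y i j : (X *m Y) i j = X i 0 * Y 0 j + X i 1 * Y 1 j.
Proof.
by rewrite !mxE !big_ord_recl big_ord0 addr0; congr (_ + X _ _ * Y _ _); apply: val_inj.
Qed.

Lemma det_mx22 Z : \det Z = Z 0 0 * Z 1 1 - Z 0 1 * Z 1 0.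
Proof.
rewrite (expand_det_row _ 0) !big_ord_recl big_ord0 addr0 /cofactor !det_mx11.
rewrite !mxE /= expr0 expr1 mul1r mulN1r mulrN.
by congr (Z _ _ * Z _ _ - Z _ _ * Z _ _); apply: val_inj.
Qed.

Lemma lie_mx22E X Y i j :
  lie_mx X Y i j = X i 0 * Y 0 j + X i 1 * Y 1 j - (Y i 0 * X 0 j + Y i 1 * X 1 j).
Proof. by rewrite /lie_mx !(mulmx22E, mxE). Qed.

Lemma oppr_det_traceless Z : \tr Z = 0 -> - \det Z = Z 0 0 ^+ 2 + Z 0 1 * Z 1 0.
Proof.
move/eqP; rewrite mxtrace22 addr_eq0 => /eqP Z11.
by rewrite det_mx22 Z11; ring.
Qed.

Lemma sqr_lower_left_oppr_det X Z : \tr Z = 0 -> \tr (X *m Z) = 0 ->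
  - (X 1 0 ^+ 2 * \det Z) =
  binary_form 1 (\tr X) (\det X) (X 1 0 * Z 0 0 + X 1 1 * Z 1 0) (- Z 1 0).
Proof.
move=> trZ trXZ; rewrite -mulrN oppr_det_traceless //.
move/eqP: trZ; rewrite mxtrace22 addr_eq0 => /eqP Z11.
have cq : X 1 0 * Z 0 1 = (X 1 1 - X 0 0) * Z 0 0 - X 0 1 * Z 1 0.
  by apply/eqP; rewrite -subr_eq0 -trXZ mxtrace22 !mulmx22E Z11; apply/eqP; ring.
rewrite /binary_form mxtrace22 det_mx22.
transitivity (X 1 0 ^+ 2 * Z 0 0 ^+ 2 + X 1 0 * Z 1 0 * (X 1 0 * Z 0 1)); first ring.
by rewrite cq; ring.
Qed.

Definition mx22 (a b c d : S) : 'M[S]_2 :=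
  \matrix_(i, j) if i == 0 then (if j == 0 then a else b) else (if j == 0 then c else d).

Lemma lie_mx22_10 X Y :
  lie_mx X Y 1 0 = X 1 0 * (Y 0 0 - Y 1 1) - Y 1 0 * (X 0 0 - X 1 1).
Proof. by rewrite lie_mx22E; ring. Qed.

Lemma lie_mx22_10_even X Y (u v : S) : \tr X = 2%:R * u -> \tr Y = 2%:R * v ->
  lie_mx X Y 1 0 = 2%:R * (X 1 0 * (v - Y 1 1) - Y 1 0 * (u - X 1 1)).
Proof.
rewrite !mxtrace22 lie_mx22_10 => /(canRL (addrK _)) -> /(canRL (addrK _)) ->.
ring.
Qed.

End TwoByTwo.

Lemma sqr_lower_left_oppr_det_lie (S : comPzRingType) (X Y : 'M[S]_2) :
  - (X 1 0 ^+ 2 * \det (lie_mx X Y)) =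
  binary_form 1 (\tr X) (\det X)
    (X 1 0 * lie_mx X Y 0 0 + X 1 1 * lie_mx X Y 1 0) (- lie_mx X Y 1 0).
Proof. exact: sqr_lower_left_oppr_det (mxtrace_lie X Y) (mxtrace_mul_lie X Y). Qed.

Lemma oppr_det_lie_companion (S : comPzRingType) (t d r1 r2 : S) :
  \tr (mx22 0 (- d) 1 t) = t /\ \det (mx22 0 (- d) 1 t) = d /\
  binary_form 1 t d r1 r2 = - \det (lie_mx (mx22 0 (- d) 1 t) (mx22 (- r2) r1 0 0)).
Proof.
rewrite mxtrace22 !det_mx22 !lie_mx22E !mxE /=.
by split; [|split]; rewrite /binary_form; ring.
Qed.

Theorem theorem5p10 (S : comPzRingType) :
  (* (1) *)
  (forall (t d n : S), Vset 1 t d n ->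
     exists X Y : 'M[S]_2,
       \tr X = t /\ \det X = d /\ n = - \det (lie_mx X Y)) /\
  (* (2) *)
  (forall X Y : 'M[S]_2,
     let c := X 1 0 in
     let t := \tr X in let d := \det X in
     let Delta := t ^+ 2 - 4%:R * d in
     Vset 1 t d (- (c ^+ 2 * \det (lie_mx X Y))) /\
     Vset2 1 (- Delta) (- (4%:R * c ^+ 2 * \det (lie_mx X Y)))) /\
  (* (3) *)
  (forall X Y : 'M[S]_2,
     let c := X 1 0 in
     let t := \tr X in let d := \det X in
     let Delta := t ^+ 2 - 4%:R * d in
     (exists u : S, \tr X = 2%:R * u) ->
     (exists v : S, \tr Y = 2%:R * v) ->
     Vset2 1 (- Delta) (- (c ^+ 2 * \det (lie_mx X Y)))).
Proof.
split; [|split].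
- move=> t d _ [r1 [r2 ->]].
  by exists (mx22 0 (- d) 1 t), (mx22 (- r2) r1 0 0); apply: oppr_det_lie_companion.
- move=> X Y /=; split.
    by rewrite sqr_lower_left_oppr_det_lie; apply: Vset_binary_form.
  rewrite -mulrA -[X in Vset2 _ _ X]mulrN sqr_lower_left_oppr_det_lie.
  rewrite binary_form_complete_square.
  exact: Vset_binary_form.
- move=> X Y /= [u trX] [v trY].
  rewrite sqr_lower_left_oppr_det_lie (lie_mx22_10_even trX trY).
  rewrite -[X in binary_form _ _ _ _ X]mulrN trX.
  rewrite binary_form_complete_square_even; exact: Vset_binary_form.
Qed.
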